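(* $\mathrm{rad}(\mathcal{P}_\infty)\subset\mathcal{P}_2$. That is, if $r$ is a Hermitian symmetric polynomial on $\mathbb{C}^n$ with $r\ge0$ and $r^N(z,\overline z)=\|f(z)\|^2$ for some positive integer $N$ and holomorphic polynomial mapping $f$, then for all $z,w\in\mathbb{C}^n$ the $2\times2$ matrix $\begin{pmatrix} r(z,\overline z) & r(z,\overline w)\\ r(w,\overline z) & r(w,\overline w)\end{pmatrix}$ is non-negative definite.
   Context: A Hermitian symmetric polynomial is $r(z,\overline w)=\sum c_{\alpha\beta}z^\alpha\overline w^\beta$ with $c_{\alpha\beta}=\overline{c_{\beta\alpha}}$. $\mathcal{P}_\infty$: those $r$ with $r(z,\overline z)=\|h(z)\|^2$ for a holomorphic polynomial mapping $h$. $\mathrm{rad}(\mathcal{P}_\infty)$: those $r$ with $r(z,\overline z)\ge0$ for all $z$ and $r^N\in\mathcal{P}_\infty$ for some positive integer $N$. $\mathcal{P}_2$: those $r$ such that for all $z_1,z_2$ the matrix $(r(z_i,\overline{z_j}))_{i,j=1}^2$ is non-negative definite. *)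

From HB Require Import structures.
From mathcomp Require Import all_boot all_order all_algebra.
From mathcomp Require Import mpoly.
From mathcomp.real_closed Require Import complex.
Set Implicit Arguments. Unset Strict Implicit. Unset Printing Implicit Defensive.
Import Order.TTheory GRing.Theory Num.Theory.
Local Open Scope ring_scope.

(* A polynomial r(z, wbar) on C^n x C^n is an mpoly in n+n variables:
   variables lshift (0..n-1) stand for z, variables rshift (n..2n-1) for wbar. *)

Definition swap_idx (n : nat) (i : 'I_(n + n)) : 'I_(n + n) :=
  match split i with inl j => rshift n j | inr j => lshift n j end.

Definition swap_mon (n : nat) (m : 'X_{1.. n + n}) : 'X_{1.. n + n} :=
  [multinom m (swap_idx i) | i < n + n].

Definition hermitian_sym (R : rcfType) (n : nat) (r : {mpoly R[i][n + n]}) : Prop :=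
  forall m : 'X_{1.. n + n}, r@_m = (r@_(swap_mon m))^*.

Definition heval (R : rcfType) (n : nat) (r : {mpoly R[i][n + n]})
  (z w : 'I_n -> R[i]) : R[i] :=
  r.@[fun i => match split i with inl j => z j | inr j => (w j)^* end].

Definition sqnorm_map (R : rcfType) (n k : nat) (h : 'I_k -> {mpoly R[i][n]})
  (z : 'I_n -> R[i]) : R[i] :=
  \sum_(j < k) (h j).@[z] * ((h j).@[z])^*.

Definition in_Pinf (R : rcfType) (n : nat) (r : {mpoly R[i][n + n]}) : Prop :=
  exists (k : nat) (h : 'I_k -> {mpoly R[i][n]}),
    forall z : 'I_n -> R[i], heval r z z = sqnorm_map h z.

Definition in_radPinf (R : rcfType) (n : nat) (r : {mpoly R[i][n + n]}) : Prop :=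
  (forall z : 'I_n -> R[i], 0 <= heval r z z) /\
  exists N : nat, (0 < N)%N /\ in_Pinf (r ^+ N).

Definition nonneg_def (R : rcfType) (m : nat) (M : 'M[R[i]]_m) : Prop :=
  forall v : 'cV[R[i]]_m, 0 <= ((map_mx Num.conj v)^T *m M *m v) 0 0.

Definition in_P2 (R : rcfType) (n : nat) (r : {mpoly R[i][n + n]}) : Prop :=
  forall z1 z2 : 'I_n -> R[i],
    nonneg_def (\matrix_(a < 2, b < 2)
      heval r (if a == 0 :> nat then z1 else z2) (if b == 0 :> nat then z1 else z2)).

(* Polarization: a polynomial P(z, wbar) with P(z, zbar) = 0 for all z vanishes
   identically, since P(x + iy, x - iy) is a polynomial vanishing on real points.
   Applied to r^N - sum_j h_j(z) conj h_j(w) and to r(z, wbar) - conj r(w, zbar)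
   (whose diagonal vanishes because r(z, zbar) is real), it gives
   r(z, wbar)^N = <h(z), h(w)> and r(w, zbar) = conj r(z, wbar).  Cauchy-Schwarz
   then yields |r(z, wbar)|^(2N) <= r(z, zbar)^N r(w, wbar)^N, hence
   |r(z, wbar)|^2 <= r(z, zbar) r(w, wbar), which together with the non-negative
   diagonal is positivity of the 2x2 Hermitian matrix. *)

From HB Require Import structures.
From mathcomp Require Import all_boot all_order all_algebra.
From mathcomp Require Import mpoly.
From mathcomp.real_closed Require Import complex.
From mathcomp Require Import ring.
Set Implicit Arguments. Unset Strict Implicit. Unset Printing Implicit Defensive.
Import Order.TTheory GRing.Theory Num.Theory.
Local Open Scope ring_scope.

Section HermitianInequalities.
Variable C : numClosedFieldType.

Lemma cauchy_schwarz_conj k (a b : 'I_k -> C) :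
  (\sum_(j < k) a j * (b j)^*) * (\sum_(j < k) a j * (b j)^*)^*
  <= (\sum_(j < k) a j * (a j)^*) * (\sum_(j < k) b j * (b j)^*).
Proof.
set S := \sum_(j < k) a j * (b j)^*.
set A := \sum_(j < k) a j * (a j)^*.
set B := \sum_(j < k) b j * (b j)^*.
have B_ge0 : 0 <= B by apply: sumr_ge0 => j _; exact: mul_conjC_ge0.
have [B0|B_neq0] := eqVneq B 0.
  have b0 j : b j = 0.
    apply/eqP; rewrite -mul_conjC_eq0; apply/eqP.
    by apply: (psumr_eq0P _ B0) => // i _; exact: mul_conjC_ge0.
  have -> : S = 0 by rewrite /S big1 // => j _; rewrite b0 rmorph0 mulr0.
  by rewrite mul0r B0 mulr0.
have B_gt0 : 0 < B by rewrite lt_def B_neq0 B_ge0.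
have conjB : B^* = B by rewrite geC0_conj.
have conjS : S^* = \sum_(j < k) b j * (a j)^*.
  by rewrite rmorph_sum; apply: eq_bigr => j _; rewrite rmorphM /= conjCK mulrC.
(* expand [0 <= \sum_j |B a_j - S b_j|^2] *)
have sum_sq : \sum_(j < k) (B * a j - S * b j) * (B * a j - S * b j)^*
              = B * (A * B - S * S^*).
  rewrite (eq_bigr (fun j => B * B * (a j * (a j)^*) - B * S^* * (a j * (b j)^*)
      - S * B * (b j * (a j)^*) + S * S^* * (b j * (b j)^*))); last first.
    by move=> j _; rewrite rmorphB !rmorphM /= conjB; ring.
  by rewrite !big_split /= !sumrN -!mulr_sumr -conjS -/S -/A -/B; ring.
rewrite -subr_ge0 -(pmulr_rge0 _ B_gt0) -sum_sq.
by apply: sumr_ge0 => j _; exact: mul_conjC_ge0.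
Qed.

Lemma hermitian2_form_ge0 (a b d x y : C) : 0 <= a -> 0 <= d -> b * b^* <= a * d ->
  0 <= x^* * a * x + x^* * b * y + y^* * b^* * x + y^* * d * y.
Proof.
move=> a_ge0 d_ge0 bb_le_ad.
have [a0|a_neq0] := eqVneq a 0.
  have : b * b^* == 0.
    by rewrite eq_le mul_conjC_ge0 andbT; move: bb_le_ad; rewrite a0 mul0r.
  rewrite mul_conjC_eq0 => /eqP b0; rewrite a0 b0 rmorph0 !mulr0 !mul0r !add0r.
  by rewrite mulrAC mulrC mulr_ge0 // mulrC mul_conjC_ge0.
have a_gt0 : 0 < a by rewrite lt_def a_neq0 a_ge0.
have conja : a^* = a by rewrite geC0_conj.
(* complete the square: a * form = |a x + b y|^2 + (a d - |b|^2) |y|^2 *)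
rewrite -(pmulr_rge0 _ a_gt0).
have -> : a * (x^* * a * x + x^* * b * y + y^* * b^* * x + y^* * d * y) =
    (a * x + b * y) * (a * x + b * y)^* + (a * d - b * b^*) * (y * y^*).
  by rewrite rmorphD !rmorphM /= conja; ring.
by rewrite addr_ge0 ?mul_conjC_ge0 // mulr_ge0 ?mul_conjC_ge0 // subr_ge0.
Qed.

End HermitianInequalities.

Lemma nonneg_def2 (R : rcfType) (M : 'M[R[i]]_2) :
  0 <= M 0 0 -> 0 <= M 1 1 -> M 1 0 = (M 0 1)^* ->
  M 0 1 * (M 0 1)^* <= M 0 0 * M 1 1 -> nonneg_def M.
Proof.
move=> M00_ge0 M11_ge0 M10E M01_le v.
rewrite !mxE !big_ord_recr !big_ord0 /= !add0r !mxE.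
rewrite !big_ord_recr !big_ord0 /= !add0r !mxE.
have -> : widen_ord (leqnSn 1) ord_max = 0 :> 'I_2 by apply/val_inj.
have -> : ord_max = 1 :> 'I_2 by apply/val_inj.
rewrite M10E.
have := hermitian2_form_ge0 (v 0 0) (v 1 0) M00_ge0 M11_ge0 M01_le.
by congr (_ <= _); ring.
Qed.

Section Valuations.
Variable T : Type.

Definition extv k (u : 'I_k -> T) (x : T) (i : 'I_k.+1) : T :=
  if unlift ord_max i is Some j then u j else x.

Lemma extv_max k (u : 'I_k -> T) x : extv u x ord_max = x.
Proof. by rewrite /extv unlift_none. Qed.

Lemma extv_widen k (u : 'I_k -> T) x j :
  extv u x (widen_ord (leqnSn k) j) = u j.
Proof.
have -> : widen_ord (leqnSn k) j = lift ord_max j by apply: ord_inj; rewrite lift_max.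
by rewrite /extv liftK.
Qed.

Lemma extv_restrict k (v : 'I_k.+1 -> T) :
  v =1 extv (fun j => v (widen_ord (leqnSn k) j)) (v ord_max).
Proof.
move=> i; rewrite /extv; case: unliftP => [j ->|-> //].
by congr v; apply: ord_inj; rewrite lift_max.
Qed.

Definition pairv n (a b : 'I_n -> T) (i : 'I_(n + n)) : T :=
  match split i with inl j => a j | inr j => b j end.

Lemma pairv_lshift n (a b : 'I_n -> T) j : pairv a b (lshift n j) = a j.
Proof. by rewrite /pairv (unsplitK (inl j)). Qed.

Lemma pairv_rshift n (a b : 'I_n -> T) j : pairv a b (rshift n j) = b j.
Proof. by rewrite /pairv (unsplitK (inr j)). Qed.

End Valuations.

Section Polarization.
Variable R : rcfType.
Local Notation C := (R[i]).

Lemma conj_real_complex (x : R) : (x%:C%C)^* = x%:C%C :> C.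
Proof. exact: conjc_real. Qed.

Lemma poly_eq0_on_reals (q : {poly C}) : (forall x : R, q.[x%:C%C] = 0) -> q = 0.
Proof.
move=> q_real; pose rs := [seq (t%:R : C) | t <- iota 0 (size q)].
apply: (@roots_geq_poly_eq0 _ _ rs); last by rewrite size_map size_iota.
  by apply/allP => _ /mapP[t _ ->]; rewrite /root -(rmorph_nat (real_complex R)) q_real.
by rewrite map_inj_uniq ?iota_uniq // => s t /eqP; rewrite eqr_nat => /eqP.
Qed.

Lemma meval_muni k (p : {mpoly C[k.+1]}) (u : 'I_k -> C) (x : C) :
  p.@[extv u x] = (map_poly (meval u) (muni p)).[x].
Proof.
rewrite muniE mevalE raddf_sum /= horner_sum; apply: eq_bigr => m _.
rewrite -mul_polyC rmorphM /= map_polyC map_polyXn hornerCM hornerXn.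
rewrite /= mevalZ mevalX big_ord_recr /= mulrA extv_max; congr (_ * _ * _).
by apply: eq_bigr => i _; rewrite mnmE extv_widen.
Qed.

Lemma meval_eq0_on_reals k (p : {mpoly C[k]}) :
  (forall u : 'I_k -> R, p.@[fun i => (u i)%:C%C] = 0) -> forall v, p.@[v] = 0.
Proof.
elim: k p => [|k IH] p p_real v.
  by rewrite -(p_real (fun _ => 0)); apply: meval_eq => -[].
rewrite (meval_eq _ (extv_restrict v)) meval_muni.
suff -> : map_poly (meval (fun j => v (widen_ord (leqnSn k) j))) (muni p) = 0
  by rewrite horner0.
apply/polyP => j; rewrite coef_map coef0 /=; apply: IH => u.
rewrite -(coef_map (meval (fun i => (u i)%:C%C))).
suff -> : map_poly (meval (fun i => (u i)%:C%C)) (muni p) = 0 by rewrite coef0.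
apply: poly_eq0_on_reals => x; rewrite -meval_muni -(p_real (extv u x)).
by apply: meval_eq => i; rewrite /extv; case: unlift.
Qed.

(* P(a, b) = (P o L)(x, y) for the invertible linear substitution
   L(x, y) = (x + i y, x - i y), and P o L vanishes on real points. *)
Lemma polarization_eq0 n (P : {mpoly C[n + n]}) :
  (forall z, P.@[pairv z (fun j => (z j)^*)] = 0) -> forall a b, P.@[pairv a b] = 0.
Proof.
move=> P_diag a b.
pose L := [tuple (match split i with
   | inl j => 'X_(lshift n j) + 'i *: 'X_(rshift n j)
   | inr j => 'X_(lshift n j) - 'i *: 'X_(rshift n j) end : {mpoly C[n + n]}) | i < n + n].
have L_eval v i : (tnth L i).@[v] =
    pairv (fun j => v (lshift n j) + 'i * v (rshift n j))
          (fun j => v (lshift n j) - 'i * v (rshift n j)) i.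
  rewrite tnth_mktuple /pairv; case: split => j;
  by rewrite ?raddfD ?raddfN /= -mul_mpolyC mevalM mevalC !mevalXU.
have PL0 v : (P \mPo L).@[v] = 0.
  apply: meval_eq0_on_reals => u; rewrite comp_mpoly_meval.
  rewrite -(P_diag (fun j => (u (lshift n j))%:C%C + 'i * (u (rshift n j))%:C%C)).
  apply: meval_eq => i; rewrite L_eval /pairv; case: split => j //.
  by rewrite rmorphD rmorphM /= !conj_real_complex conjCi mulNr.
have := PL0 (pairv (fun j => (a j + b j) / 2) (fun j => (a j - b j) / 2 * - 'i)).
rewrite comp_mpoly_meval => <-; apply: meval_eq => i.
have two_neq0 : (2 : C) != 0 by rewrite pnatr_eq0.
have i_mulN_i : 'i * - 'i = 1 :> C by rewrite mulrN -expr2 sqrCi opprK.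
rewrite L_eval /pairv; case: (split i) => j;
  by rewrite !(unsplitK (inl _)) !(unsplitK (inr _)) mulrCA i_mulN_i mulr1; field.
Qed.

Lemma meval_map_conj k (f : {mpoly C[k]}) (w : 'I_k -> C) :
  (map_mpoly Num.conj f).@[fun j => (w j)^*] = (f.@[w])^*.
Proof.
rewrite !mevalE (perm_big _ (msupp_map_mpoly _ (can_inj (@conjCK _)))) rmorph_sum.
apply: eq_bigr => m _; rewrite mcoeff_map_mpoly rmorphM rmorph_prod; congr (_ * _).
by apply: eq_bigr => i _; rewrite rmorphXn.
Qed.

Definition holo_lift n (f : {mpoly C[n]}) : {mpoly C[n + n]} :=
  f \mPo [tuple 'X_(lshift n i) | i < n].
Definition antiholo_lift n (f : {mpoly C[n]}) : {mpoly C[n + n]} :=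
  map_mpoly Num.conj f \mPo [tuple 'X_(rshift n i) | i < n].

Lemma meval_holo_lift n (f : {mpoly C[n]}) a b : (holo_lift f).@[pairv a b] = f.@[a].
Proof.
rewrite comp_mpoly_meval; apply: meval_eq => i.
by rewrite tnth_mktuple mevalXU pairv_lshift.
Qed.

Lemma meval_antiholo_lift n (f : {mpoly C[n]}) a b :
  (antiholo_lift f).@[pairv a (fun j => (b j)^*)] = (f.@[b])^*.
Proof.
rewrite comp_mpoly_meval -meval_map_conj; apply: meval_eq => i.
by rewrite tnth_mktuple mevalXU pairv_rshift.
Qed.

End Polarization.

Section HermitianPolynomials.
Variables (R : rcfType) (n : nat).
Implicit Type r : {mpoly R[i][n + n]}.

Lemma hevalE r z w : heval r z w = r.@[pairv z (fun j => (w j)^*)].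
Proof. by []. Qed.

Lemma heval_conj_swap r : (forall z, 0 <= heval r z z) ->
  forall z w, heval r z w = (heval r w z)^*.
Proof.
move=> r_ge0.
pose rs := map_mpoly Num.conj r \mPo [tuple 'X_(swap_idx i) | i < n + n].
have rsE z w : rs.@[pairv z (fun j => (w j)^*)] = (heval r w z)^*.
  rewrite comp_mpoly_meval hevalE -meval_map_conj; apply: meval_eq => i.
  rewrite tnth_mktuple mevalXU /swap_idx /pairv.
  by case: (split i) => j; rewrite ?(unsplitK (inl _)) ?(unsplitK (inr _)) ?conjCK.
have diag0 z : (r - rs).@[pairv z (fun j => (z j)^*)] = 0.
  by rewrite rmorphB /= rsE -hevalE geC0_conj ?subrr.
move=> z w; have := polarization_eq0 diag0 z (fun j => (w j)^*).
by rewrite rmorphB /= rsE -hevalE => /subr0_eq.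
Qed.

Lemma in_Pinf_polarized r N : in_Pinf (r ^+ N) ->
  exists k (h : 'I_k -> {mpoly R[i][n]}), forall z w,
    heval r z w ^+ N = \sum_(j < k) (h j).@[z] * ((h j).@[w])^*.
Proof.
move=> [k [h rNE]]; exists k, h => z w.
pose P := r ^+ N - \sum_(j < k) holo_lift (h j) * antiholo_lift (h j).
have sumE (a b : 'I_n -> R[i]) :
    \sum_(j < k) (holo_lift (h j) * antiholo_lift (h j)).@[pairv a (fun j => (b j)^*)]
    = \sum_(j < k) (h j).@[a] * ((h j).@[b])^*.
  apply: eq_bigr => j _; rewrite mevalM.
  by congr (_ * _); [exact: meval_holo_lift | exact: meval_antiholo_lift].
have diag0 (a : 'I_n -> R[i]) : P.@[pairv a (fun j => (a j)^*)] = 0.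
  have := rNE a; rewrite hevalE /sqnorm_map => rNa.
  by rewrite rmorphB /= rNa rmorph_sum /= sumE subrr.
have := polarization_eq0 diag0 z (fun j => (w j)^*).
by rewrite rmorphB rmorph_sum /= sumE hevalE rmorphXn => /subr0_eq.
Qed.

End HermitianPolynomials.

Theorem lemma7p1 (R : rcfType) (n : nat) (r : {mpoly R[i][n + n]}) :
  hermitian_sym r -> in_radPinf r -> in_P2 r.
Proof.
move=> _ [r_ge0 [N [N_gt0 rN]]] z w.
have [k [h rNE]] := in_Pinf_polarized rN.
apply: nonneg_def2; rewrite !mxE /=; [exact: r_ge0 | exact: r_ge0 | exact: heval_conj_swap |].
rewrite -(ler_pXn2r N_gt0) ?nnegrE ?mul_conjC_ge0 ?mulr_ge0 //.
by rewrite !exprMn -[(_^*) ^+ N]rmorphXn !rNE; exact: cauchy_schwarz_conj.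
Qed.
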